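(* Let $\mathbf{D}$ be a 2-category with an enhanced factorization system $(\mathcal{E},\mathcal{M})$ and $\mathbf{C}$ a small 2-category. If $(\mathcal{E},\mathcal{M})$ separates parallel pairs, every 1-cell in $\mathcal{E}$ is a 2-epimorphism, every 1-cell in $\mathcal{M}$ is a 2-monomorphism, and post-composition with 1-cells in $\mathcal{M}$ creates invertible 2-cells, then the enhanced factorization system $(\mathcal{E}^{\mathbf{C}},\mathcal{M}^{\mathbf{C}})$ on $\mathbf{D}^{\mathbf{C}}$ is rigid: for every $\mu\colon F\Rightarrow G$ in $\mathcal{M}^{\mathbf{C}}$ and 2-natural transformation $\alpha\colon G\Rightarrow F$, if $\mu\alpha\cong\mathrm{id}_G$ then $\alpha\mu\cong\mathrm{id}_F$.
   Context: For a 2-category $\mathbf{A}$, an enhanced factorization system on $\mathbf{A}$ is a pair $(\mathcal{E},\mathcal{M})$ of classes of 1-cells of $\mathbf{A}$, each containing all isomorphisms, such that: (i) every 1-cell $\alpha$ factors (not necessarily uniquely) as $\alpha=\mu\circ\varepsilon$ with $\varepsilon\in\mathcal{E}$, $\mu\in\mathcal{M}$; (ii) given $\varepsilon\colon F\to F'$ in $\mathcal{E}$, $\mu\colon G\to G'$ in $\mathcal{M}$, 1-cells $\alpha\colon F\to G$, $\alpha'\colon F'\to G'$ and an invertible 2-cell $\Psi\colon \alpha'\varepsilon\Rightarrow\mu\alpha$, there is a unique pair $(\delta,\widetilde\Psi)$ with $\delta\colon F'\to G$ a 1-cell and $\widetilde\Psi\colon\alpha'\Rightarrow\mu\delta$ an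 invertible 2-cell such that $\delta\varepsilon=\alpha$ and the whiskering $\widetilde\Psi\varepsilon=\Psi$; moreover if $\Psi$ is an identity then $\mu\delta=\alpha'$ and $\widetilde\Psi$ is an identity; (iii) given $\varepsilon\colon F\to F'$ in $\mathcal{E}$, $\mu\colon G\to G'$ in $\mathcal{M}$, parallel 1-cells $\alpha_1,\alpha_2\colon F\to G$ and $\alpha_1',\alpha_2'\colon F'\to G'$ with $\alpha_i'\varepsilon=\mu\alpha_i$ ($i=1,2$), and 2-cells $\Phi\colon\alpha_1\Rightarrow\alpha_2$, $\Phi'\colon\alpha_1'\Rightarrow\alpha_2'$ with $\mu\Phi=\Phi'\varepsilon$, let $\delta_i\colon F'\to G$ be the unique 1-cells with $\delta_i\varepsilon=\alpha_i$ and $\mu\delta_i=\alpha_i'$ (from (ii) with identity 2-cell); then there is a unique 2-cell $\Delta\colon\delta_1\Rightarrow\delta_2$ with $\Delta\varepsilon=\Phi$ and $\mu\Delta=\Phi'$. It is rigid if moreover: for 1-cells $\mu\colon F\to G$ in $\mathcal{M}$ and $\alpha\colon G\to F$, if $\mu\alpha\cong\mathrm{id}_G$ then $\alpha\mu\cong\mathrm{id}_F$. $(\mathcal{E},\mathcal{M})$ separates parallel pairs if whenever $\alpha,\beta\colon F\to G$ are parallel 1-cells for which there exist $\varepsilon\in\mathcal{E}$ with target $F$ and $\alpha\varepsilon=\beta\varepsilon$, and $\mu\in\mathcal{M}$ with source $G$ and $\mu\alpha=\mu\beta$, then $\alpha=\beta$. A 1-cell $\varepsilon\colon F\to G$ is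 a 2-epimorphism if for all 1-cells $\beta,\beta'\colon G\to H$ and 2-cells $\Psi,\Psi'\colon\beta\Rightarrow\beta'$, $\Psi\varepsilon=\Psi'\varepsilon$ implies $\Psi=\Psi'$. A 1-cell $\mu\colon G\to H$ is a 2-monomorphism if for all 1-cells $\beta,\beta'\colon F\to G$ and 2-cells $\Psi,\Psi'\colon\beta\Rightarrow\beta'$, $\mu\Psi=\mu\Psi'$ implies $\Psi=\Psi'$. Post-composition with a 1-cell $\mu$ creates invertible 2-cells if for all parallel 1-cells $\alpha,\beta$ (composable with $\mu$) and every invertible 2-cell $\Psi\colon\mu\alpha\Rightarrow\mu\beta$ there is a unique invertible 2-cell $\widehat\Psi\colon\alpha\Rightarrow\beta$ with $\mu\widehat\Psi=\Psi$; post-composition with 1-cells in $\mathcal{M}$ creates invertible 2-cells if this holds for every $\mu\in\mathcal{M}$. $\mathbf{D}^{\mathbf{C}}$ is the 2-category of 2-functors $\mathbf{C}\to\mathbf{D}$, 2-natural transformations, and modifications. $\mathcal{E}^{\mathbf{C}}$ (resp. $\mathcal{M}^{\mathbf{C}}$) is the class of 2-natural transformations all of whose components lie in $\mathcal{E}$ (resp. $\mathcal{M}$). *)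

From Stdlib Require Import Logic.

Definition castC {T : Type} (X : T -> T -> Type) {a a' b b' : T}
  (e1 : a = a') (e2 : b = b') (x : X a b) : X a' b' :=
  match e1 in _ = a1 return X a1 b' with
  | eq_refl => match e2 in _ = b1 return X a b1 with eq_refl => x end
  end.

(* A (strict) 2-category. Equality of 1-cells is Leibniz equality. *)
Record TwoCat := {
  Obj :> Type;
  Hom : Obj -> Obj -> Type;
  Cell : forall A B, Hom A B -> Hom A B -> Type;
  id1 : forall A, Hom A A;
  comp1 : forall A B C, Hom B C -> Hom A B -> Hom A C;
  id2 : forall A B (f : Hom A B), Cell A B f f;
  vcomp : forall A B (f g h : Hom A B), Cell A B g h -> Cell A B f g -> Cell A B f h;
  hcomp : forall A B C (f f' : Hom A B) (g g' : Hom B C),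
      Cell B C g g' -> Cell A B f f' -> Cell A C (comp1 A B C g f) (comp1 A B C g' f');
  comp1_assoc : forall A B C D (f : Hom A B) (g : Hom B C) (h : Hom C D),
      comp1 A C D h (comp1 A B C g f) = comp1 A B D (comp1 B C D h g) f;
  comp1_idl : forall A B (f : Hom A B), comp1 A B B (id1 B) f = f;
  comp1_idr : forall A B (f : Hom A B), comp1 A A B f (id1 A) = f;
  vcomp_assoc : forall A B (f g h k : Hom A B) (x : Cell A B h k) (y : Cell A B g h)
      (z : Cell A B f g),
      vcomp A B f h k x (vcomp A B f g h y z) = vcomp A B f g k (vcomp A B g h k x y) z;
  vcomp_idl : forall A B (f g : Hom A B) (x : Cell A B f g), vcomp A B f g g (id2 A B g) x = x;
  vcomp_idr : forall A B (f g : Hom A B) (x : Cell A B f g), vcomp A B f f g x (id2 A B f) = x;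
  hcomp_id2 : forall A B C (f : Hom A B) (g : Hom B C),
      hcomp A B C f f g g (id2 B C g) (id2 A B f) = id2 A C (comp1 A B C g f);
  interchange : forall A B C (f f' f'' : Hom A B) (g g' g'' : Hom B C)
      (b' : Cell B C g' g'') (b : Cell B C g g') (a' : Cell A B f' f'') (a : Cell A B f f'),
      hcomp A B C f f'' g g'' (vcomp B C g g' g'' b' b) (vcomp A B f f' f'' a' a)
      = vcomp A C _ _ _ (hcomp A B C f' f'' g' g'' b' a') (hcomp A B C f f' g g' b a);
  hcomp_assoc : forall A B C D (f f' : Hom A B) (g g' : Hom B C) (h h' : Hom C D)
      (x : Cell C D h h') (y : Cell B C g g') (z : Cell A B f f'),
      castC (Cell A D) (comp1_assoc A B C D f g h) (comp1_assoc A B C D f' g' h')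
        (hcomp A C D _ _ h h' x (hcomp A B C f f' g g' y z))
      = hcomp A B D f f' _ _ (hcomp B C D g g' h h' x y) z;
  hcomp_idl : forall A B (f f' : Hom A B) (x : Cell A B f f'),
      castC (Cell A B) (comp1_idl A B f) (comp1_idl A B f')
        (hcomp A B B f f' (id1 B) (id1 B) (id2 B B (id1 B)) x) = x;
  hcomp_idr : forall A B (f f' : Hom A B) (x : Cell A B f f'),
      castC (Cell A B) (comp1_idr A B f) (comp1_idr A B f')
        (hcomp A A B (id1 A) (id1 A) f f' x (id2 A A (id1 A))) = x
}.

Arguments Hom {t} A B.
Arguments Cell {t A B} f g.
Arguments id1 {t} A.
Arguments comp1 {t A B C} g f.
Arguments id2 {t A B} f.
Arguments vcomp {t A B f g h} x y.
Arguments hcomp {t A B C f f' g g'} y x.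
Arguments comp1_assoc {t A B C D} f g h.
Arguments comp1_idl {t A B} f.
Arguments comp1_idr {t A B} f.

Definition wR {D : TwoCat} {A B C : D} {g g' : Hom B C} (x : Cell g g') (f : Hom A B)
  : Cell (comp1 g f) (comp1 g' f) := hcomp x (id2 f).
Definition wL {D : TwoCat} {A B C : D} (h : Hom B C) {f f' : Hom A B} (x : Cell f f')
  : Cell (comp1 h f) (comp1 h f') := hcomp (id2 h) x.

Definition inv2 {D : TwoCat} {A B : D} {f g : Hom A B} (x : Cell f g) : Prop :=
  exists y : Cell g f, vcomp y x = id2 f /\ vcomp x y = id2 g.

Definition iso1 {D : TwoCat} {A B : D} (f : Hom A B) : Prop :=
  exists g : Hom B A, comp1 g f = id1 A /\ comp1 f g = id1 B.

Definition MorClass (D : TwoCat) := forall A B : D, Hom A B -> Prop.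

Definition EnhancedFS (D : TwoCat) (E M : MorClass D) : Prop :=
  (forall (A B : D) (f : Hom A B), iso1 f -> E A B f /\ M A B f)
  /\
  (forall (A B : D) (f : Hom A B),
     exists (X : D) (e : Hom A X) (m : Hom X B), E A X e /\ M X B m /\ comp1 m e = f)
  /\
  (forall (F F' G G' : D) (eps : Hom F F') (mu : Hom G G') (al : Hom F G)
          (al' : Hom F' G') (Psi : Cell (comp1 al' eps) (comp1 mu al)),
     E F F' eps -> M G G' mu -> inv2 Psi ->
     exists (dl : Hom F' G) (e : comp1 dl eps = al) (Pt : Cell al' (comp1 mu dl)),
       inv2 Pt
       /\ castC Cell eq_refl (eq_trans (eq_sym (comp1_assoc eps dl mu))
                                      (f_equal (comp1 mu) e)) (wR Pt eps) = Psi
       /\ (forall (dl' : Hom F' G) (e' : comp1 dl' eps = al) (Pt' : Cell al' (comp1 mu dl')),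
             inv2 Pt' ->
             castC Cell eq_refl (eq_trans (eq_sym (comp1_assoc eps dl' mu))
                                          (f_equal (comp1 mu) e')) (wR Pt' eps) = Psi ->
             exists p : dl = dl', castC Cell eq_refl (f_equal (comp1 mu) p) Pt = Pt')
       /\ (forall e0 : comp1 al' eps = comp1 mu al,
             Psi = castC Cell eq_refl e0 (id2 (comp1 al' eps)) ->
             exists e1 : al' = comp1 mu dl, Pt = castC Cell eq_refl e1 (id2 al')))
  /\
  (forall (F F' G G' : D) (eps : Hom F F') (mu : Hom G G')
          (al1 al2 : Hom F G) (al1' al2' : Hom F' G')
          (e1 : comp1 al1' eps = comp1 mu al1) (e2 : comp1 al2' eps = comp1 mu al2)
          (Phi : Cell al1 al2) (Phi' : Cell al1' al2'),
     E F F' eps -> M G G' mu ->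
     wL mu Phi = castC Cell e1 e2 (wR Phi' eps) ->
     forall (dl1 dl2 : Hom F' G)
            (d1 : comp1 dl1 eps = al1) (d2 : comp1 dl2 eps = al2)
            (d1' : comp1 mu dl1 = al1') (d2' : comp1 mu dl2 = al2'),
     exists Dl : Cell dl1 dl2,
       castC Cell d1 d2 (wR Dl eps) = Phi
       /\ castC Cell d1' d2' (wL mu Dl) = Phi'
       /\ (forall Dl' : Cell dl1 dl2,
             castC Cell d1 d2 (wR Dl' eps) = Phi ->
             castC Cell d1' d2' (wL mu Dl') = Phi' -> Dl' = Dl)).

Definition SeparatesParallelPairs (D : TwoCat) (E M : MorClass D) : Prop :=
  forall (F G : D) (al be : Hom F G),
    (exists (X : D) (eps : Hom X F), E X F eps /\ comp1 al eps = comp1 be eps) ->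
    (exists (Y : D) (mu : Hom G Y), M G Y mu /\ comp1 mu al = comp1 mu be) ->
    al = be.

Definition is2Epi {D : TwoCat} {F G : D} (eps : Hom F G) : Prop :=
  forall (H : D) (be be' : Hom G H) (Psi Psi' : Cell be be'),
    wR Psi eps = wR Psi' eps -> Psi = Psi'.

Definition is2Mono {D : TwoCat} {G H : D} (mu : Hom G H) : Prop :=
  forall (F : D) (be be' : Hom F G) (Psi Psi' : Cell be be'),
    wL mu Psi = wL mu Psi' -> Psi = Psi'.

Definition PostCompCreatesInv {D : TwoCat} {G H : D} (mu : Hom G H) : Prop :=
  forall (F : D) (al be : Hom F G) (Psi : Cell (comp1 mu al) (comp1 mu be)),
    inv2 Psi ->
    exists Ph : Cell al be, inv2 Ph /\ wL mu Ph = Psi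
      /\ (forall Ph' : Cell al be, inv2 Ph' -> wL mu Ph' = Psi -> Ph' = Ph).

Record TwoFun (C D : TwoCat) := {
  F0 :> C -> D;
  F1 : forall A B : C, Hom A B -> Hom (F0 A) (F0 B);
  F2 : forall (A B : C) (f g : Hom A B), Cell f g -> Cell (F1 A B f) (F1 A B g);
  F1_id : forall A : C, F1 A A (id1 A) = id1 (F0 A);
  F1_comp : forall (A B X : C) (f : Hom A B) (g : Hom B X),
      F1 A X (comp1 g f) = comp1 (F1 B X g) (F1 A B f);
  F2_id : forall (A B : C) (f : Hom A B), F2 A B f f (id2 f) = id2 (F1 A B f);
  F2_vcomp : forall (A B : C) (f g h : Hom A B) (x : Cell g h) (y : Cell f g),
      F2 A B f h (vcomp x y) = vcomp (F2 A B g h x) (F2 A B f g y);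
  F2_hcomp : forall (A B X : C) (f f' : Hom A B) (g g' : Hom B X)
      (y : Cell g g') (x : Cell f f'),
      castC Cell (F1_comp A B X f g) (F1_comp A B X f' g')
        (F2 A X _ _ (hcomp y x)) = hcomp (F2 B X g g' y) (F2 A B f f' x)
}.
Arguments F1 {C D} t {A B} f.
Arguments F2 {C D} t {A B f g} x.

(* families of 1-cells with 1-naturality; 2-naturality is the predicate is2Nat *)
Record PreTrans {C D : TwoCat} (F G : TwoFun C D) := {
  tc : forall A : C, Hom (F A) (G A);
  tnat : forall (A B : C) (f : Hom A B),
      comp1 (F1 G f) (tc A) = comp1 (tc B) (F1 F f)
}.
Arguments tc {C D F G} p A.
Arguments tnat {C D F G} p {A B} f.

Definition is2Nat {C D : TwoCat} {F G : TwoFun C D} (s : PreTrans F G) : Prop :=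
  forall (A B : C) (f f' : Hom A B) (x : Cell f f'),
    castC Cell (tnat s f) (tnat s f') (wR (F2 G x) (tc s A)) = wL (tc s B) (F2 F x).

Definition tcomp {C D : TwoCat} {F G H : TwoFun C D}
  (mu : PreTrans G H) (al : PreTrans F G) : PreTrans F H.
Proof.
  refine {| tc := fun A => comp1 (tc mu A) (tc al A) |}.
  intros A B f.
  exact (eq_trans (comp1_assoc _ _ _)
        (eq_trans (f_equal (fun z => comp1 z (tc al A)) (tnat mu f))
        (eq_trans (eq_sym (comp1_assoc _ _ _))
        (eq_trans (f_equal (comp1 (tc mu B)) (tnat al f))
                  (comp1_assoc _ _ _))))).
Defined.

Definition tid {C D : TwoCat} (F : TwoFun C D) : PreTrans F F.
Proof.
  refine {| tc := fun A => id1 (F A) |}.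
  intros A B f.
  exact (eq_trans (comp1_idr _) (eq_sym (comp1_idl _))).
Defined.

Definition isModif {C D : TwoCat} {F G : TwoFun C D} (s t : PreTrans F G)
  (Ga : forall A : C, Cell (tc s A) (tc t A)) : Prop :=
  forall (A B : C) (f : Hom A B),
    castC Cell (tnat s f) (tnat t f) (wL (F1 G f) (Ga A)) = wR (Ga B) (F1 F f).

(* s and t are isomorphic 1-cells of D^C: there is an invertible modification *)
Definition isoT {C D : TwoCat} {F G : TwoFun C D} (s t : PreTrans F G) : Prop :=
  exists (Ga : forall A, Cell (tc s A) (tc t A)) (Ga' : forall A, Cell (tc t A) (tc s A)),
    isModif s t Ga /\ isModif t s Ga' /\
    forall A : C, vcomp (Ga' A) (Ga A) = id2 (tc s A) /\ vcomp (Ga A) (Ga' A) = id2 (tc t A).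

(* Whisker the invertible modification Gamma : mu al => id by mu to get invertible 2-cells
   mu al mu => mu; since post-composition with mu_A creates invertible 2-cells, each is
   mu_A Phi_A for a unique invertible Phi_A : al_A mu_A => id. The family Phi is a
   modification because mu_B is a 2-monomorphism and, after whiskering by mu_B, the
   modification square of Phi becomes that of Gamma whiskered by mu. *)
From Stdlib Require Import ProofIrrelevance IndefiniteDescription.

Lemma dependent_functional_choice {I : Type} {T : I -> Type} (P : forall i, T i -> Prop) :
  (forall i, exists x, P i x) -> exists f : forall i, T i, forall i, P i (f i).
Proof.
  intros H. exists (fun i => proj1_sig (constructive_indefinite_description _ (H i))).
  intro i. exact (proj2_sig (constructive_indefinite_description _ (H i))).
Qed.

(* Equality of 2-cells whose boundaries are only propositionally equal. *)
Definition HEq {D : TwoCat} {A B : D} {f g f' g' : Hom A B}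
  (x : Cell f g) (y : Cell f' g') : Prop :=
  exists (e1 : f = f') (e2 : g = g'), castC Cell e1 e2 x = y.

Section HeterogeneousCells.
Context {D : TwoCat}.

Lemma heq_refl {A B : D} {f g : Hom A B} (x : Cell f g) : HEq x x.
Proof. exists eq_refl, eq_refl. reflexivity. Qed.

Lemma heq_sym {A B : D} {f g f' g' : Hom A B} (x : Cell f g) (y : Cell f' g') :
  HEq x y -> HEq y x.
Proof. intros [e1 [e2 H]]. destruct e1, e2. simpl in H. subst. apply heq_refl. Qed.

Lemma heq_trans {A B : D} {f g f' g' f'' g'' : Hom A B} (x : Cell f g) (y : Cell f' g')
  (z : Cell f'' g'') : HEq x y -> HEq y z -> HEq x z.
Proof.
  intros [e1 [e2 H]] [e3 [e4 H']]. destruct e1, e2, e3, e4. simpl in *. subst.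
  apply heq_refl.
Qed.

Lemma heq_cast {A B : D} {f g f' g' : Hom A B} (e1 : f = f') (e2 : g = g') (x : Cell f g) :
  HEq (castC Cell e1 e2 x) x.
Proof. destruct e1, e2. apply heq_refl. Qed.

Lemma heq_eq {A B : D} {f g : Hom A B} (x y : Cell f g) : HEq x y -> x = y.
Proof.
  intros [e1 [e2 H]].
  rewrite (proof_irrelevance _ e1 eq_refl), (proof_irrelevance _ e2 eq_refl) in H.
  exact H.
Qed.

Lemma heq_hcomp {A B C : D} {f f' f2 f2' : Hom A B} {g g' g2 g2' : Hom B C}
  (y : Cell g g') (y' : Cell g2 g2') (x : Cell f f') (x' : Cell f2 f2') :
  HEq y y' -> HEq x x' -> HEq (hcomp y x) (hcomp y' x').
Proof.
  intros [e1 [e2 H]] [e3 [e4 H']]. destruct e1, e2, e3, e4. simpl in *. subst.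
  apply heq_refl.
Qed.

Lemma heq_hcomp_assoc {A B C E : D} (f f' : Hom A B) (g g' : Hom B C) (h h' : Hom C E)
  (x : Cell h h') (y : Cell g g') (z : Cell f f') :
  HEq (hcomp x (hcomp y z)) (hcomp (hcomp x y) z).
Proof. exists (comp1_assoc f g h), (comp1_assoc f' g' h'). apply hcomp_assoc. Qed.

Lemma heq_hcomp_id2 {A B C : D} (f : Hom A B) (g : Hom B C) :
  HEq (hcomp (id2 g) (id2 f)) (id2 (comp1 g f)).
Proof. exists eq_refl, eq_refl. apply hcomp_id2. Qed.

Lemma heq_wL {A B C : D} (h : Hom B C) {f g f' g' : Hom A B}
  (x : Cell f g) (y : Cell f' g') : HEq x y -> HEq (wL h x) (wL h y).
Proof. intros Hxy. apply heq_hcomp; [apply heq_refl | exact Hxy]. Qed.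

Lemma heq_wR {A B C : D} (f : Hom A B) {g h g' h' : Hom B C}
  (x : Cell g h) (y : Cell g' h') : HEq x y -> HEq (wR x f) (wR y f).
Proof. intros Hxy. apply heq_hcomp; [exact Hxy | apply heq_refl]. Qed.

Lemma heq_wL_congr {A B C : D} {h h' : Hom B C} {f f' : Hom A B} (x : Cell f f') :
  h = h' -> HEq (wL h x) (wL h' x).
Proof. intros e. destruct e. apply heq_refl. Qed.

Lemma heq_wR_congr {A B C : D} {f f' : Hom A B} {g g' : Hom B C} (x : Cell g g') :
  f = f' -> HEq (wR x f) (wR x f').
Proof. intros e. destruct e. apply heq_refl. Qed.

Lemma heq_wL_comp {A B C E : D} (h : Hom C E) (g : Hom B C) {f f' : Hom A B}
  (x : Cell f f') : HEq (wL h (wL g x)) (wL (comp1 h g) x).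
Proof.
  unfold wL. eapply heq_trans; [apply heq_hcomp_assoc |].
  apply heq_hcomp; [apply heq_hcomp_id2 | apply heq_refl].
Qed.

Lemma heq_wR_comp {A B C E : D} (f : Hom A B) (g : Hom B C) {h h' : Hom C E}
  (x : Cell h h') : HEq (wR (wR x g) f) (wR x (comp1 g f)).
Proof.
  unfold wR. eapply heq_trans; [apply heq_sym, heq_hcomp_assoc |].
  apply heq_hcomp; [apply heq_refl | apply heq_hcomp_id2].
Qed.

Lemma heq_wL_wR {A B C E : D} (h : Hom C E) (f : Hom A B) {g g' : Hom B C}
  (x : Cell g g') : HEq (wL h (wR x f)) (wR (wL h x) f).
Proof. apply heq_hcomp_assoc. Qed.

Lemma heq_inverse {A B : D} {p q p' q' : Hom A B} (X : Cell p q) (X' : Cell p' q')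
  (Y : Cell q p) (Y' : Cell q' p') :
  HEq X X' -> vcomp Y X = id2 p -> vcomp X Y = id2 q ->
  vcomp Y' X' = id2 p' -> vcomp X' Y' = id2 q' -> HEq Y Y'.
Proof.
  intros [e1 [e2 H]]. destruct e1, e2. simpl in H. subst X'.
  intros YX _ _ XY'. exists eq_refl, eq_refl. simpl.
  rewrite <- (vcomp_idr _ _ _ _ _ Y), <- XY', vcomp_assoc, YX. apply vcomp_idl.
Qed.

Lemma inv2_cast {A B : D} {f g f' g' : Hom A B} (e1 : f = f') (e2 : g = g') (x : Cell f g) :
  inv2 x -> inv2 (castC Cell e1 e2 x).
Proof. destruct e1, e2. auto. Qed.

Lemma wR_vcomp_id {A B C : D} {g g' : Hom B C} (x : Cell g g') (y : Cell g' g) (f : Hom A B) :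
  vcomp y x = id2 g -> vcomp (wR y f) (wR x f) = id2 (comp1 g f).
Proof.
  intros H. unfold wR. rewrite <- interchange, H, vcomp_idl. apply hcomp_id2.
Qed.

Lemma wL_vcomp_id {A B C : D} (h : Hom B C) {f f' : Hom A B} (x : Cell f f') (y : Cell f' f) :
  vcomp y x = id2 f -> vcomp (wL h y) (wL h x) = id2 (comp1 h f).
Proof.
  intros H. unfold wL. rewrite <- interchange, H, vcomp_idl. apply hcomp_id2.
Qed.

Lemma inv2_wR {A B C : D} {g g' : Hom B C} (x : Cell g g') (f : Hom A B) :
  inv2 x -> inv2 (wR x f).
Proof. intros [y [yx xy]]. exists (wR y f). split; apply wR_vcomp_id; assumption. Qed.

Lemma creates_inv_swap_iso {A B : D} (m : Hom A B) (a : Hom B A)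
  (Ga : Cell (comp1 m a) (id1 B)) :
  PostCompCreatesInv m -> inv2 Ga ->
  exists Ph : Cell (comp1 a m) (id1 A), inv2 Ph /\ HEq (wL m Ph) (wR Ga m).
Proof.
  intros Hcreate Ga_inv.
  set (Psi := castC Cell (eq_sym (comp1_assoc m a m))
                (eq_trans (comp1_idl m) (eq_sym (comp1_idr m))) (wR Ga m)).
  assert (Psi_inv : inv2 Psi) by (apply inv2_cast, inv2_wR, Ga_inv).
  destruct (Hcreate A _ _ Psi Psi_inv) as [Ph [Ph_inv [Ph_Psi _]]].
  exists Ph. split; [exact Ph_inv |].
  rewrite Ph_Psi. apply heq_cast.
Qed.

End HeterogeneousCells.

Section Modifications.
Context {C D : TwoCat}.

Lemma heq_of_isModif {F G : TwoFun C D} (s t : PreTrans F G) (Ga : forall A, Cell (tc s A) (tc t A)) :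
  isModif s t Ga ->
  forall (A B : C) (f : Hom A B), HEq (wL (F1 G f) (Ga A)) (wR (Ga B) (F1 F f)).
Proof. intros Hmod A B f. exists (tnat s f), (tnat t f). apply Hmod. Qed.

Lemma isModif_inverse {F G : TwoFun C D} (s t : PreTrans F G) (Ga : forall A, Cell (tc s A) (tc t A))
  (Ga' : forall A, Cell (tc t A) (tc s A)) :
  isModif s t Ga ->
  (forall A, vcomp (Ga' A) (Ga A) = id2 (tc s A) /\ vcomp (Ga A) (Ga' A) = id2 (tc t A)) ->
  isModif t s Ga'.
Proof.
  intros Hmod Hinv A B f. apply heq_eq.
  eapply heq_trans; [apply heq_cast |].
  destruct (Hinv A) as [invA1 invA2], (Hinv B) as [invB1 invB2].
  eapply heq_inverse.
  - exact (heq_of_isModif s t Ga Hmod A B f).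
  - apply wL_vcomp_id. exact invA1.
  - apply wL_vcomp_id. exact invA2.
  - apply wR_vcomp_id. exact invB1.
  - apply wR_vcomp_id. exact invB2.
Qed.

Lemma isModif_whiskered_by_2mono {F G : TwoFun C D} (mu : PreTrans F G) (al : PreTrans G F)
  (Ga : forall A, Cell (tc (tcomp mu al) A) (tc (tid G) A))
  (Phi : forall A, Cell (tc (tcomp al mu) A) (tc (tid F) A)) :
  (forall A, is2Mono (tc mu A)) ->
  isModif (tcomp mu al) (tid G) Ga ->
  (forall A, HEq (wL (tc mu A) (Phi A)) (wR (Ga A) (tc mu A))) ->
  isModif (tcomp al mu) (tid F) Phi.
Proof.
  intros mu_2mono Ga_mod Phi_Ga A B f.
  apply (mu_2mono B), heq_eq.
  eapply heq_trans; [apply heq_wL, heq_cast |].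
  eapply heq_trans; [apply heq_wL_comp |].
  eapply heq_trans; [exact (heq_wL_congr _ (eq_sym (tnat mu f))) |].
  eapply heq_trans; [apply heq_sym, heq_wL_comp |].
  eapply heq_trans; [apply heq_wL, Phi_Ga |].
  eapply heq_trans; [apply heq_wL_wR |].
  eapply heq_trans; [apply heq_wR, (heq_of_isModif _ _ _ Ga_mod A B f) |].
  eapply heq_trans; [apply heq_wR_comp |].
  eapply heq_trans; [exact (heq_wR_congr _ (tnat mu f)) |].
  eapply heq_trans; [apply heq_sym, heq_wR_comp |].
  eapply heq_trans; [apply heq_wR, heq_sym, Phi_Ga |].
  apply heq_sym, heq_wL_wR.
Qed.

End Modifications.

Theorem corollary4p2p1 :
  forall (D : TwoCat) (E M : MorClass D),
    EnhancedFS D E M ->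
    SeparatesParallelPairs D E M ->
    (forall (A B : D) (eps : Hom A B), E A B eps -> is2Epi eps) ->
    (forall (A B : D) (mu : Hom A B), M A B mu -> is2Mono mu) ->
    (forall (A B : D) (mu : Hom A B), M A B mu -> PostCompCreatesInv mu) ->
    forall (C : TwoCat) (F G : TwoFun C D) (mu : PreTrans F G) (al : PreTrans G F),
      is2Nat mu -> is2Nat al ->
      (forall A : C, M (F A) (G A) (tc mu A)) ->
      isoT (tcomp mu al) (tid G) ->
      isoT (tcomp al mu) (tid F).
Proof.
  intros D E M _ _ _ Hmono Hcreate C F G mu al _ _ HM [Ga [Ga' [Ga_mod [_ Ga_inv]]]].
  assert (Phi_ex : forall A : C, exists Ph : Cell (comp1 (tc al A) (tc mu A)) (id1 (F A)),
            inv2 Ph /\ HEq (wL (tc mu A) Ph) (wR (Ga A) (tc mu A))).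
  { intro A. apply creates_inv_swap_iso; [exact (Hcreate _ _ _ (HM A)) |].
    exists (Ga' A). exact (Ga_inv A). }
  destruct (dependent_functional_choice _ Phi_ex) as [Phi Phi_spec].
  destruct (dependent_functional_choice
              (fun A (Ph' : Cell (id1 (F A)) (comp1 (tc al A) (tc mu A))) =>
                 vcomp Ph' (Phi A) = id2 _ /\ vcomp (Phi A) Ph' = id2 _)
              (fun A => proj1 (Phi_spec A))) as [Phi' Phi_inv].
  assert (Phi_mod : isModif (tcomp al mu) (tid F) Phi).
  { apply (isModif_whiskered_by_2mono mu al Ga);
      [intro A; exact (Hmono _ _ _ (HM A)) | exact Ga_mod | intro A; exact (proj2 (Phi_spec A))]. }
  exists Phi, Phi'. split; [exact Phi_mod | split; [| exact Phi_inv]].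
  exact (isModif_inverse (tcomp al mu) (tid F) Phi Phi' Phi_mod Phi_inv).
Qed.
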